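(* Let $\psi$ be a real function defined on a set containing $(-\infty,0]$ with $\psi \in \mathrm{BT}(\mathbb{R}_-)$. Then $$\{\mathrm{id} - f : f \in \mathrm{Sol}(\psi)\} = \mathrm{Sol}(\mathrm{id}-\psi) \quad\text{and}\quad \{\mathrm{id} - f : f \in \mathrm{Sol}^\#(\psi)\} = \mathrm{Sol}^\#(\mathrm{id}-\psi),$$ where $\mathrm{id} - f$ denotes $x \mapsto x - f(x)$.
   Context: $\mathbb{R}_- = (-\infty,0]$. For $I \in \{\mathbb{R}_-, \mathbb{R}\}$ and $g : D \subseteq \mathbb{R} \to \mathbb{R}$, $g \in \mathrm{BT}(I)$ means $I \subseteq D$ and $xg(x) \ge 0$, $x(x-g(x)) \ge 0$ for all $x \in I$; $g \in \mathrm{BT}^\#(I)$ means additionally both inequalities are strict for $x \in I$, $x \ne 0$ (nothing is required of $g(0)$). For $\psi \in \mathrm{BT}(\mathbb{R}_-)$, $\mathrm{Sol}(\psi)$ is the set of functions $f \in \mathrm{BT}(\mathbb{R})$ such that $f(x) = \psi(x)$ for all $x \le 0$ and $f(f(-x)+x) = f(-f(x)) + f(x)$ for all $x \in \mathbb{R}$; $\mathrm{Sol}^\#(\psi) := \mathrm{Sol}(\psi) \cap \mathrm{BT}^\#(\mathbb{R})$. *)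

From Stdlib Require Import Reals.
Open Scope R_scope.

Definition Rminus_set (x : R) : Prop := x <= 0.
Definition Rall (x : R) : Prop := True.

Definition BT (I : R -> Prop) (g : R -> R) : Prop :=
  forall x, I x -> 0 <= x * g x /\ 0 <= x * (x - g x).

Definition BTs (I : R -> Prop) (g : R -> R) : Prop :=
  BT I g /\ forall x, I x -> x <> 0 -> 0 < x * g x /\ 0 < x * (x - g x).

Definition idminus (g : R -> R) : R -> R := fun x => x - g x.

Definition Sol (psi : R -> R) (f : R -> R) : Prop :=
  BT Rall f /\
  (forall x, x <= 0 -> f x = psi x) /\
  (forall x, f (f (- x) + x) = f (- f x) + f x).

Definition Sols (psi : R -> R) (f : R -> R) : Prop :=
  Sol psi f /\ BTs Rall f.

(* The map f |-> id - f is an involution which exchanges the two inequalities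
   defining BT and BT#, keeps the prescribed values on R_- (with psi replaced
   by id - psi), and turns the functional equation for f, taken at -x, into the
   functional equation for id - f at x.  Hence it maps Sol(psi) into
   Sol(id - psi) and, being an involution, onto it. *)
From Stdlib Require Import Reals FunctionalExtensionality.
Open Scope R_scope.

Definition functional_equation (f : R -> R) : Prop :=
  forall x, f (f (- x) + x) = f (- f x) + f x.

Lemma idminusK (g : R -> R) : idminus (idminus g) = g.
Proof. apply functional_extensionality; intro x; unfold idminus; ring. Qed.

Lemma functional_equation_idminus (f : R -> R) :
  functional_equation f -> functional_equation (idminus f).
Proof.
  intros Hf x; unfold idminus.
  pose proof (Hf (- x)) as Hfx.
  rewrite Ropp_involutive in Hfx.
  replace (- x - f (- x) + x) with (- f (- x)) by ring.
  replace (- (x - f x)) with (f x + - x) by ring.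
  rewrite Hfx; ring.
Qed.

Lemma BT_idminus (I : R -> Prop) (f : R -> R) : BT I f -> BT I (idminus f).
Proof.
  intros Hf x Ix; destruct (Hf x Ix) as [Hpos Hsub]; unfold idminus.
  replace (x - (x - f x)) with (f x) by ring; tauto.
Qed.

Lemma BTs_idminus (I : R -> Prop) (f : R -> R) : BTs I f -> BTs I (idminus f).
Proof.
  intros [Hf Hstrict]; split; [now apply BT_idminus |].
  intros x Ix Hx; destruct (Hstrict x Ix Hx) as [Hpos Hsub]; unfold idminus.
  replace (x - (x - f x)) with (f x) by ring; tauto.
Qed.

Lemma Sol_idminus (psi f : R -> R) : Sol psi f -> Sol (idminus psi) (idminus f).
Proof.
  intros (Hbt & Hpsi & Heq); split; [| split].
  - now apply BT_idminus.
  - intros x Hx; unfold idminus; now rewrite Hpsi.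
  - now apply functional_equation_idminus.
Qed.

Lemma Sols_idminus (psi f : R -> R) : Sols psi f -> Sols (idminus psi) (idminus f).
Proof. intros [Hsol Hbts]; split; [now apply Sol_idminus | now apply BTs_idminus]. Qed.

Lemma image_idminus (P Q : (R -> R) -> Prop) :
  (forall f, P f -> Q (idminus f)) -> (forall g, Q g -> P (idminus g)) ->
  forall g, (exists f, P f /\ g = idminus f) <-> Q g.
Proof.
  intros HPQ HQP g; split.
  - intros (f & Hf & ->); now apply HPQ.
  - intro Hg; exists (idminus g); split; [now apply HQP | now rewrite idminusK].
Qed.

Theorem proposition1 (psi : R -> R) (Hpsi : BT Rminus_set psi) :
  (forall g : R -> R,
     (exists f, Sol psi f /\ g = idminus f) <-> Sol (idminus psi) g) /\
  (forall g : R -> R,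
     (exists f, Sols psi f /\ g = idminus f) <-> Sols (idminus psi) g).
Proof.
  split; apply image_idminus.
  - apply Sol_idminus.
  - intros g Hg; rewrite <- (idminusK psi); now apply Sol_idminus.
  - apply Sols_idminus.
  - intros g Hg; rewrite <- (idminusK psi); now apply Sols_idminus.
Qed.
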